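(* Let $S\subset\mathbb{Z}^d$ be a finite set (not necessarily symmetric), $\mathcal{P}=\{P_\alpha\}_{\alpha\in S}$ a resolution of unity on $\mathbb{C}^D$, $C$ a $D\times D$ unitary matrix with $C^2=I$ that is not a scalar multiple of the identity, $\mathcal{S}=\sum_{\alpha\in S}\tau^\alpha P_\alpha$, and $U_C=\mathcal{S}^*C\mathcal{S}C$ on $\ell^2(\mathbb{Z}^d,\mathbb{C}^D)$. If $\dim\mathcal{E}(1)<\dim\mathcal{E}(-1)$, then $U_C$ has eigenvalue $1$; consequently there exist a nonzero $\phi\in\mathbb{C}^D$ and $x_o\in\mathbb{Z}^d$ with $\limsup_{n\to\infty}\|U_C^n(\delta_0\otimes\phi)(x_o)\|^2>0$.
   Context: A resolution of unity: orthogonal projections $P_\alpha$ on $\mathbb{C}^D$, $P_\alpha P_\beta=0$ ($\alpha\neq\beta$), $\sum_\alpha P_\alpha=I$. $(\tau^\alpha f)(x)=f(x-\alpha)$; $C$ acts pointwise on $\ell^2(\mathbb{Z}^d,\mathbb{C}^D)$. $\mathcal{E}(\pm1)$ are the eigenspaces of $C$ for $\pm1$. $\delta_0\otimes\phi$ equals $\phi$ at $0$ and $0$ elsewhere. Eigenvalue means point spectrum. *)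

From Stdlib Require Import Reals ZArith List.
Open Scope R_scope.

Record Cx := mkC { re : R ; im : R }.
Definition Czero : Cx := mkC 0 0.
Definition Cone : Cx := mkC 1 0.
Definition Cadd (a b : Cx) : Cx := mkC (re a + re b) (im a + im b).
Definition Copp (a : Cx) : Cx := mkC (- re a) (- im a).
Definition Cmul (a b : Cx) : Cx :=
  mkC (re a * re b - im a * im b) (re a * im b + im a * re b).
Definition Cconj (a : Cx) : Cx := mkC (re a) (- im a).
Definition Cnorm2 (a : Cx) : R := re a ^ 2 + im a ^ 2.

Fixpoint csum (n : nat) (f : nat -> Cx) : Cx :=
  match n with O => Czero | S m => Cadd (csum m f) (f m) end.
Fixpoint rsum (n : nat) (f : nat -> R) : R :=
  match n with O => 0 | S m => rsum m f + f m end.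

(** * Vectors of C^D and D x D matrices (only indices < D are meaningful) *)
Definition cvec := nat -> Cx.
Definition cmat := nat -> nat -> Cx.
Definition vec_eq (D : nat) (u v : cvec) : Prop := forall i, (i < D)%nat -> u i = v i.
Definition mat_eq (D : nat) (A B : cmat) : Prop :=
  forall i j, (i < D)%nat -> (j < D)%nat -> A i j = B i j.
Definition vzero : cvec := fun _ => Czero.
Definition vadd (u v : cvec) : cvec := fun i => Cadd (u i) (v i).
Definition vscal (c : Cx) (u : cvec) : cvec := fun i => Cmul c (u i).
Definition vnorm2 (D : nat) (v : cvec) : R := rsum D (fun i => Cnorm2 (v i)).
Definition mId : cmat := fun i j => if Nat.eqb i j then Cone else Czero.
Definition mzero : cmat := fun _ _ => Czero.
Definition mscal (c : Cx) (A : cmat) : cmat := fun i j => Cmul c (A i j).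
Definition madd (A B : cmat) : cmat := fun i j => Cadd (A i j) (B i j).
Definition mmul (D : nat) (A B : cmat) : cmat :=
  fun i j => csum D (fun k => Cmul (A i k) (B k j)).
Definition madj (A : cmat) : cmat := fun i j => Cconj (A j i).
Definition mvmul (D : nat) (A : cmat) (v : cvec) : cvec :=
  fun i => csum D (fun j => Cmul (A i j) (v j)).

Definition unitary (D : nat) (A : cmat) : Prop :=
  mat_eq D (mmul D (madj A) A) mId /\ mat_eq D (mmul D A (madj A)) mId.
Definition orth_proj (D : nat) (P : cmat) : Prop :=
  mat_eq D (madj P) P /\ mat_eq D (mmul D P P) P.

(** * The lattice Z^d : points are maps nat -> Z vanishing at coordinates >= d *)
Definition pt := nat -> Z.
Definition Zpt (d : nat) (x : pt) : Prop := forall k, (d <= k)%nat -> x k = 0%Z.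
Definition zsub (x a : pt) : pt := fun k => (x k - a k)%Z.
Definition zadd (x a : pt) : pt := fun k => (x k + a k)%Z.
Fixpoint is_origin (d : nat) (x : pt) : bool :=
  match d with O => true | S n => Z.eqb (x n) 0 && is_origin n x end.

Definition lsum {A : Type} (L : list A) (F : A -> cmat) : cmat :=
  fold_right (fun a acc => madd (F a) acc) mzero L.
Definition lvsum {A : Type} (L : list A) (F : A -> cvec) : cvec :=
  fold_right (fun a acc => vadd (F a) acc) vzero L.

(** Resolution of unity {P_a}_{a in S} on C^D, S a finite subset of Z^d
    (given as a duplicate-free list of lattice points). *)
Definition resolution_of_unity (d D : nat) (S : list pt) (P : pt -> cmat) : Prop :=
  NoDup S /\ Forall (Zpt d) S /\
  (forall a, In a S -> orth_proj D (P a)) /\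
  (forall a b, In a S -> In b S -> a <> b -> mat_eq D (mmul D (P a) (P b)) mzero) /\
  mat_eq D (lsum S P) mId.

Definition field := pt -> cvec.
Definition feq (d D : nat) (f g : field) : Prop :=
  forall x, Zpt d x -> vec_eq D (f x) (g x).
Definition fnonzero (d D : nat) (f : field) : Prop :=
  exists x, Zpt d x /\ exists i, (i < D)%nat /\ f x i <> Czero.
(** membership in l^2(Z^d, C^D): the partial sums of sum_x ||f(x)||^2 over
    finite sets of lattice points are bounded *)
Definition l2 (d D : nat) (f : field) : Prop :=
  exists M : R, forall L : list pt, NoDup L -> Forall (Zpt d) L ->
    fold_right (fun x acc => vnorm2 D (f x) + acc) 0 L <= M.

(** shift  S = sum_{a in S} tau^a P_a, with (tau^a f)(x) = f(x - a) *)
Definition Shift (D : nat) (S : list pt) (P : pt -> cmat) (f : field) : field :=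
  fun x => lvsum S (fun a => mvmul D (P a) (f (zsub x a))).
Definition ShiftAdj (D : nat) (S : list pt) (P : pt -> cmat) (f : field) : field :=
  fun x => lvsum S (fun a => mvmul D (madj (P a)) (f (zadd x a))).
Definition Coin (D : nat) (C : cmat) (f : field) : field := fun x => mvmul D C (f x).
Definition UC (D : nat) (S : list pt) (P : pt -> cmat) (C : cmat) (f : field) : field :=
  ShiftAdj D S P (Coin D C (Shift D S P (Coin D C f))).

Definition is_eigenvalue (d D : nat) (T : field -> field) (lam : Cx) : Prop :=
  exists f, l2 d D f /\ fnonzero d D f /\ feq d D (T f) (fun x => vscal lam (f x)).

Definition in_eigenspace (D : nat) (C : cmat) (lam : Cx) (v : cvec) : Prop :=
  vec_eq D (mvmul D C v) (vscal lam v).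
Definition lin_indep (D k : nat) (w : nat -> cvec) : Prop :=
  forall c : nat -> Cx,
    (forall i, (i < D)%nat -> csum k (fun j => Cmul (c j) (w j i)) = Czero) ->
    forall j, (j < k)%nat -> c j = Czero.
Definition dim_ge (D : nat) (E : cvec -> Prop) (k : nat) : Prop :=
  exists w : nat -> cvec, (forall j, (j < k)%nat -> E (w j)) /\ lin_indep D k w.
(** dim E1 < dim E2  (dim = largest k with k independent vectors) *)
Definition dim_lt (D : nat) (E1 E2 : cvec -> Prop) : Prop :=
  exists k, dim_ge D E2 k /\ ~ dim_ge D E1 k.

Definition delta0 (d : nat) (phi : cvec) : field :=
  fun x => if is_origin d x then phi else vzero.

Definition limsup_pos (a : nat -> R) : Prop :=
  exists eps, 0 < eps /\ forall N, exists n, (N <= n)%nat /\ eps <= a n.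

(* Let the eigenspace [E(-1)] of [C] contain [k] independent vectors and let [E(1)] be
   spanned by [r < k] vectors. Superpose point masses [delta_x (x) w] with [x] in a box of
   side [N] and [w] in [E(-1)]: [k N^d] free coefficients. Requiring [(I + C) S f = 0] costs
   [r] conditions at each point of the box of side [N + 2a] reached by the shift ([a] bounds
   the coordinates of [S]), and [r (N + 2a)^d < k N^d] for large [N], so a nonzero such [f]
   exists. Since [C^2 = I], [(I + C) S f = 0] means [C S f = -S f]; with [C f = -f] this gives
   [U_C f = S^* C S C f = S^* S f = f], a finitely supported eigenvector. Finally, if
   [U_C^n (delta_0 (x) phi)] decayed at every point for each of the finitely many [phi] used,
   the same would hold for [U_C^n f = f]. *)

From Stdlib Require Import Reals ZArith List Lia Lra Psatz.
From Stdlib Require Import Classical ClassicalEpsilon FunctionalExtensionality.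
Open Scope R_scope.

(** * Complex arithmetic *)

Definition Csub (a b : Cx) : Cx := Cadd a (Copp b).

Lemma Cx_eq (a b : Cx) : re a = re b -> im a = im b -> a = b.
Proof. destruct a, b; simpl; intros -> ->; reflexivity. Qed.

Lemma Cx_ring : ring_theory Czero Cone Cadd Cmul Csub Copp (@eq Cx).
Proof.
  constructor; intros; apply Cx_eq; destruct x; try destruct y; try destruct z;
    unfold Csub; simpl; ring.
Qed.
Add Ring Cx_ring : Cx_ring.

Lemma Cone_neq0 : Cone <> Czero.
Proof. intro E; injection E; lra. Qed.

Definition Cinv (a : Cx) : Cx := mkC (re a / Cnorm2 a) (- im a / Cnorm2 a).

Lemma Cnorm2_ge0 (a : Cx) : 0 <= Cnorm2 a.
Proof. destruct a as [x y]; unfold Cnorm2; simpl; nra. Qed.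

Lemma Cnorm2_gt0 (a : Cx) : a <> Czero -> 0 < Cnorm2 a.
Proof.
  destruct a as [x y]; unfold Cnorm2; simpl; intro Ha.
  destruct (Req_dec x 0), (Req_dec y 0); subst; try nra.
  exfalso; apply Ha; reflexivity.
Qed.

Lemma Cnorm2_mul (a b : Cx) : Cnorm2 (Cmul a b) = Cnorm2 a * Cnorm2 b.
Proof. destruct a, b; unfold Cnorm2; simpl; ring. Qed.

Lemma Cmul_inv_r (a : Cx) : a <> Czero -> Cmul a (Cinv a) = Cone.
Proof.
  intro Ha; pose proof (Cnorm2_gt0 a Ha) as Hn.
  destruct a as [x y]; unfold Cnorm2 in Hn; simpl in Hn.
  apply Cx_eq; unfold Cinv, Cnorm2; simpl; field; lra.
Qed.

(** * Finite sums *)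

Lemma csum_ext n f g : (forall j, (j < n)%nat -> f j = g j) -> csum n f = csum n g.
Proof.
  revert f g; induction n; intros f g H; simpl; auto.
  rewrite (IHn f g), H by (auto || lia); reflexivity.
Qed.

Lemma csum_add n f g : csum n (fun j => Cadd (f j) (g j)) = Cadd (csum n f) (csum n g).
Proof. induction n; simpl; [ring | rewrite IHn; ring]. Qed.

Lemma csum_mul_l n c f : Cmul c (csum n f) = csum n (fun j => Cmul c (f j)).
Proof. induction n; simpl; [ring | rewrite <- IHn; ring]. Qed.

Lemma csum_opp n f : Copp (csum n f) = csum n (fun j => Copp (f j)).
Proof. induction n; simpl; [ring | rewrite <- IHn; ring]. Qed.

Lemma csum_eq0 n f : (forall j, (j < n)%nat -> f j = Czero) -> csum n f = Czero.
Proof.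
  intro H; rewrite (csum_ext n f (fun _ => Czero)) by auto; clear H.
  induction n; simpl; [|rewrite IHn]; ring.
Qed.

Lemma csum_swap n m (F : nat -> nat -> Cx) :
  csum n (fun i => csum m (F i)) = csum m (fun j => csum n (fun i => F i j)).
Proof.
  induction n; simpl.
  - symmetry; apply csum_eq0; auto.
  - rewrite IHn, <- csum_add; reflexivity.
Qed.

Lemma csum_app a b F : csum (a + b) F = Cadd (csum a F) (csum b (fun j => F (a + j)%nat)).
Proof.
  induction b; simpl.
  - rewrite Nat.add_0_r; ring.
  - rewrite Nat.add_succ_r; simpl; rewrite IHb; ring.
Qed.

Lemma csum_mul_split q k F :
  csum (q * k) F = csum q (fun a => csum k (fun b => F (a * k + b)%nat)).
Proof. induction q; simpl; auto. rewrite Nat.add_comm, csum_app, IHq; reflexivity. Qed.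

Lemma csum_single n F q0 : (q0 < n)%nat ->
  (forall q, (q < n)%nat -> q <> q0 -> F q = Czero) -> csum n F = F q0.
Proof.
  induction n; intros Hq0 H; [lia|]; simpl.
  destruct (Nat.eq_dec q0 n) as [->|].
  - rewrite csum_eq0 by (intros; apply H; lia); ring.
  - rewrite IHn, (H n) by (auto || lia); ring.
Qed.

Lemma rsum_ge0 n f : (forall j, (j < n)%nat -> 0 <= f j) -> 0 <= rsum n f.
Proof.
  induction n; intro H; simpl; [lra|].
  specialize (IHn ltac:(auto)); specialize (H n ltac:(lia)); lra.
Qed.

Lemma rsum_le_term n f i : (forall j, (j < n)%nat -> 0 <= f j) -> (i < n)%nat -> f i <= rsum n f.
Proof.
  induction n; intros H Hi; simpl; [lia|].
  assert (0 <= rsum n f) by (apply rsum_ge0; auto).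
  destruct (Nat.eq_dec i n) as [->|]; [lra|].
  specialize (IHn ltac:(auto) ltac:(lia)); specialize (H n ltac:(lia)); lra.
Qed.

Lemma rsum_le n f g : (forall j, (j < n)%nat -> f j <= g j) -> rsum n f <= rsum n g.
Proof.
  induction n; intro H; simpl; [lra|].
  specialize (IHn ltac:(auto)); specialize (H n ltac:(lia)); lra.
Qed.

Lemma rsum_mul_l n c f : rsum n (fun j => c * f j) = c * rsum n f.
Proof. induction n; simpl; [|rewrite IHn]; ring. Qed.

Lemma rsum_add n f g : rsum n (fun j => f j + g j) = rsum n f + rsum n g.
Proof. induction n; simpl; [|rewrite IHn]; ring. Qed.

Lemma rsum_eq0 n f : (forall j, (j < n)%nat -> f j = 0) -> rsum n f = 0.
Proof.
  induction n; intro H; simpl; auto.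
  rewrite IHn, H by (auto || lia); ring.
Qed.

Lemma re_csum n f : re (csum n f) = rsum n (fun j => re (f j)).
Proof. induction n; simpl; [|rewrite IHn]; reflexivity. Qed.

Lemma im_csum n f : im (csum n f) = rsum n (fun j => im (f j)).
Proof. induction n; simpl; [|rewrite IHn]; reflexivity. Qed.

Lemma rsum_sq_le n f : (rsum n f) ^ 2 <= INR n * rsum n (fun j => f j ^ 2).
Proof.
  induction n; simpl rsum; [simpl; lra|].
  rewrite S_INR.
  set (s := rsum n f) in *; set (q := rsum n (fun j => f j ^ 2)) in *; set (v := f n).
  destruct (Nat.eq_dec n 0) as [->|Hn].
  - unfold s, q; simpl; nra.
  - set (N := INR n) in *.
    assert (HN : 0 < N) by (apply lt_0_INR; lia).
    (* Cauchy-Schwarz step: [N (s + v)^2 <= N (N + 1)(q + v^2)] via [(s - N v)^2 >= 0] *)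
    assert (N * (s + v) ^ 2 <= N * ((N + 1) * (q + v ^ 2))).
    { pose proof (pow2_ge_0 (s - N * v)).
      assert (N * s ^ 2 <= N * (N * q)) by (apply Rmult_le_compat_l; lra). nra. }
    now apply Rmult_le_reg_l with N.
Qed.

Lemma Cnorm2_csum_le n f : Cnorm2 (csum n f) <= INR n * rsum n (fun j => Cnorm2 (f j)).
Proof.
  pose proof (rsum_sq_le n (fun j => re (f j))).
  pose proof (rsum_sq_le n (fun j => im (f j))).
  unfold Cnorm2 at 1; rewrite re_csum, im_csum.
  unfold Cnorm2; rewrite rsum_add; lra.
Qed.

Definition csumL {X : Type} (L : list X) (g : X -> Cx) : Cx :=
  fold_right (fun a acc => Cadd (g a) acc) Czero L.

Lemma lvsum_eval {X} (L : list X) F i : lvsum L F i = csumL L (fun a => F a i).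
Proof. induction L; simpl; auto. unfold vadd; rewrite IHL; reflexivity. Qed.

Lemma lsum_eval {X} (L : list X) F i j : lsum L F i j = csumL L (fun a => F a i j).
Proof. induction L; simpl; auto. unfold madd; rewrite IHL; reflexivity. Qed.

Lemma csumL_ext {X} (L : list X) f g : (forall a, In a L -> f a = g a) -> csumL L f = csumL L g.
Proof.
  induction L; intro H; simpl; auto.
  rewrite H, IHL; simpl; auto. intros; apply H; simpl; auto.
Qed.

Lemma csumL_mul_l {X} (L : list X) c f : Cmul c (csumL L f) = csumL L (fun a => Cmul c (f a)).
Proof. induction L; simpl; [ring | rewrite <- IHL; ring]. Qed.

Lemma csumL_opp {X} (L : list X) f : Copp (csumL L f) = csumL L (fun a => Copp (f a)).
Proof. induction L; simpl; [ring | rewrite <- IHL; ring]. Qed.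

Lemma csumL_eq0 {X} (L : list X) f : (forall a, In a L -> f a = Czero) -> csumL L f = Czero.
Proof.
  intro H; rewrite (csumL_ext L f (fun _ => Czero)) by auto; clear H.
  induction L; simpl; [|rewrite IHL]; ring.
Qed.

Lemma csumL_csum {X} (L : list X) m (F : X -> nat -> Cx) :
  csumL L (fun a => csum m (F a)) = csum m (fun l => csumL L (fun a => F a l)).
Proof.
  induction L; simpl.
  - symmetry; apply csum_eq0; auto.
  - rewrite IHL, <- csum_add; reflexivity.
Qed.

Lemma csumL_single {X} (L : list X) f a : NoDup L -> In a L ->
  (forall b, In b L -> b <> a -> f b = Czero) -> csumL L f = f a.
Proof.
  induction L as [|x L IH]; intros Hnd Hin Hz; [destruct Hin|]; simpl.
  inversion Hnd; subst.
  destruct Hin as [<-|Hin].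
  - rewrite csumL_eq0; [ring|]. intros b Hb; apply Hz; [right; auto | congruence].
  - rewrite IH, Hz; [ring | left | | | |]; auto; [congruence|].
    intros b Hb Hne; apply Hz; auto; right; auto.
Qed.

Definition rsumL {X} (L : list X) (g : X -> R) : R := fold_right (fun x acc => g x + acc) 0 L.

Lemma rsumL_app {X} (L1 L2 : list X) g : rsumL (L1 ++ L2) g = rsumL L1 g + rsumL L2 g.
Proof. induction L1; simpl; [|rewrite IHL1]; ring. Qed.

Lemma rsumL_ge0 {X} (B : list X) g : (forall y, 0 <= g y) -> 0 <= rsumL B g.
Proof. intro H; induction B; simpl; [lra|]. specialize (H a); lra. Qed.

Lemma rsumL_le_support {X} (L B : list X) g : NoDup L -> (forall y, 0 <= g y) ->
  (forall y, In y L -> g y <> 0 -> In y B) -> rsumL L g <= rsumL B g.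
Proof.
  revert B; induction L as [|a L IH]; intros B Hnd Hg Hs; simpl.
  - apply rsumL_ge0; auto.
  - inversion Hnd; subst.
    destruct (Req_dec (g a) 0) as [Ha0|Ha0].
    + assert (rsumL L g <= rsumL B g) by (apply IH; auto; intros; apply Hs; simpl; auto). lra.
    + destruct (in_split a B) as [B1 [B2 ->]]; [apply Hs; simpl; auto|].
      assert (rsumL L g <= rsumL (B1 ++ B2) g).
      { apply IH; auto. intros y Hy Hgy.
        destruct (in_app_or _ _ _ (Hs y (or_intror Hy) Hgy)) as [|[<-|]];
          [| contradiction | ]; apply in_or_app; auto. }
      rewrite rsumL_app in *; simpl; lra.
Qed.

(** * Linear algebra on C^D *)

Definition lin_comb (n : nat) (c : nat -> Cx) (w : nat -> cvec) : cvec :=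
  fun i => csum n (fun j => Cmul (c j) (w j i)).

Definition spanned_by (D r : nat) (b : nat -> cvec) (E : cvec -> Prop) : Prop :=
  forall v, E v -> exists al, vec_eq D v (lin_comb r al b).

Lemma mvmul_ext_v D A u v i :
  (forall j, (j < D)%nat -> u j = v j) -> mvmul D A u i = mvmul D A v i.
Proof. intro H; apply csum_ext; intros; rewrite H; auto. Qed.

Lemma mvmul_ext_m D A B v i :
  (forall j, (j < D)%nat -> A i j = B i j) -> mvmul D A v i = mvmul D B v i.
Proof. intro H; apply csum_ext; intros; rewrite H; auto. Qed.

Lemma mvmul_mmul D A B v i : mvmul D A (mvmul D B v) i = mvmul D (mmul D A B) v i.
Proof.
  unfold mvmul, mmul.
  transitivity (csum D (fun j => csum D (fun k => Cmul (A i j) (Cmul (B j k) (v k))))).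
  { apply csum_ext; intros; apply csum_mul_l. }
  rewrite csum_swap; apply csum_ext; intros j _.
  transitivity (Cmul (v j) (csum D (fun k => Cmul (A i k) (B k j)))); [|ring].
  rewrite csum_mul_l; apply csum_ext; intros; ring.
Qed.

Lemma mvmul_id D v i : (i < D)%nat -> mvmul D mId v i = v i.
Proof.
  intro Hi; unfold mvmul; rewrite (csum_single D _ i Hi).
  - unfold mId; rewrite Nat.eqb_refl; ring.
  - intros j _ Hj; unfold mId; destruct (Nat.eqb_spec i j); [lia | ring].
Qed.

Lemma mvmul_vzero D A i : mvmul D A vzero i = Czero.
Proof. apply csum_eq0; intros; unfold vzero; ring. Qed.

Lemma mvmul_row_eq0 D A v i :
  (forall j, (j < D)%nat -> A i j = Czero) -> mvmul D A v i = Czero.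
Proof. intro H; apply csum_eq0; intros; rewrite H by auto; ring. Qed.

Lemma mvmul_vadd D A u v i : mvmul D A (vadd u v) i = Cadd (mvmul D A u i) (mvmul D A v i).
Proof. unfold mvmul, vadd; rewrite <- csum_add; apply csum_ext; intros; ring. Qed.

Lemma mvmul_opp D A v i : mvmul D A (fun j => Copp (v j)) i = Copp (mvmul D A v i).
Proof. unfold mvmul; rewrite csum_opp; apply csum_ext; intros; ring. Qed.

Lemma mvmul_lin_comb D A m c F i :
  mvmul D A (lin_comb m c F) i = lin_comb m c (fun l => mvmul D A (F l)) i.
Proof.
  unfold mvmul, lin_comb.
  transitivity (csum D (fun j => csum m (fun l => Cmul (c l) (Cmul (A i j) (F l j))))).
  { apply csum_ext; intros; rewrite csum_mul_l; apply csum_ext; intros; ring. }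
  rewrite csum_swap; apply csum_ext; intros; symmetry; apply csum_mul_l.
Qed.

Lemma mvmul_lsum {X} D (L : list X) F v i :
  mvmul D (lsum L F) v i = csumL L (fun a => mvmul D (F a) v i).
Proof.
  unfold mvmul; rewrite csumL_csum; apply csum_ext; intros j _.
  rewrite lsum_eval.
  transitivity (Cmul (v j) (csumL L (fun a => F a i j))); [ring|].
  rewrite csumL_mul_l; apply csumL_ext; intros; ring.
Qed.

Lemma mvmul_lvsum {X} D A (L : list X) F i :
  mvmul D A (lvsum L F) i = csumL L (fun a => mvmul D A (F a) i).
Proof.
  unfold mvmul; rewrite csumL_csum; apply csum_ext; intros.
  rewrite lvsum_eval, csumL_mul_l; reflexivity.
Qed.

Lemma mmul_ext D A A' B B' :
  mat_eq D A A' -> mat_eq D B B' -> mat_eq D (mmul D A B) (mmul D A' B').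
Proof. intros HA HB i j Hi Hj; apply csum_ext; intros; rewrite HA, HB; auto. Qed.

Lemma in_eigenspace_lin_comb D C lam m c F :
  (forall l, (l < m)%nat -> in_eigenspace D C lam (F l)) ->
  in_eigenspace D C lam (lin_comb m c F).
Proof.
  intros HF i Hi; rewrite mvmul_lin_comb; unfold lin_comb, vscal.
  rewrite csum_mul_l; apply csum_ext; intros l Hl.
  rewrite (HF l Hl i Hi); unfold vscal; ring.
Qed.

Lemma in_eigenspace_vzero D C lam : in_eigenspace D C lam vzero.
Proof. intros i _; rewrite mvmul_vzero; unfold vscal, vzero; ring. Qed.

Lemma in_eigenspace_add_mvmul D C v :
  mat_eq D (mmul D C C) mId -> in_eigenspace D C Cone (vadd v (mvmul D C v)).
Proof.
  intros HCC i Hi; rewrite mvmul_vadd, mvmul_mmul.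
  rewrite (mvmul_ext_m D (mmul D C C) mId) by (intros; apply HCC; auto).
  rewrite mvmul_id by auto; unfold vadd, vscal; ring.
Qed.

(* Gaussian elimination on the last unknown. *)
Lemma exists_nontrivial_kernel m n (A : nat -> nat -> Cx) : (n < m)%nat ->
  exists c, (exists j, (j < m)%nat /\ c j <> Czero) /\
    forall i, (i < n)%nat -> csum m (fun j => Cmul (A i j) (c j)) = Czero.
Proof.
  revert n A; induction m as [|m IH]; intros n A Hnm; [lia|].
  destruct (classic (exists i0, (i0 < n)%nat /\ A i0 m <> Czero)) as [[i0 [Hi0 Hpiv]]|Hzero].
  - set (skip := fun r => if Nat.ltb r i0 then r else S r).
    set (mult := fun i => Cmul (A i m) (Cinv (A i0 m))).
    set (A' := fun r j => Csub (A (skip r) j) (Cmul (mult (skip r)) (A i0 j))).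
    destruct (IH (n - 1)%nat A') as [c' [[j0 [Hj0 Hc0]] Hker']]; [lia|].
    set (row0 := csum m (fun j => Cmul (A i0 j) (c' j))).
    exists (fun j => if Nat.eqb j m then Copp (Cmul (Cinv (A i0 m)) row0) else c' j); split.
    { exists j0; split; [lia|]. destruct (Nat.eqb_spec j0 m); [lia | auto]. }
    intros i Hi; simpl; rewrite Nat.eqb_refl.
    rewrite (csum_ext m _ (fun j => Cmul (A i j) (c' j)))
      by (intros j Hj; destruct (Nat.eqb_spec j m); [lia | auto]).
    assert (Hinv : Cmul (A i0 m) (Cinv (A i0 m)) = Cone) by (apply Cmul_inv_r; auto).
    assert (Hrow : csum m (fun j => Cmul (A i j) (c' j)) = Cmul (mult i) row0).
    { destruct (Nat.eq_dec i i0) as [->|Hne].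
      - unfold mult; rewrite Hinv; fold row0; ring.
      - assert (exists r, (r < n - 1)%nat /\ skip r = i) as [r [Hr <-]].
        { unfold skip; destruct (Nat.ltb_spec i i0).
          - exists i; destruct (Nat.ltb_spec i i0); split; lia.
          - exists (i - 1)%nat; destruct (Nat.ltb_spec (i - 1) i0); split; lia. }
        transitivity (Cadd (csum m (fun j => Cmul (A' r j) (c' j)))
                           (Cmul (mult (skip r)) row0)).
        + unfold row0; rewrite csum_mul_l, <- csum_add.
          apply csum_ext; intros; unfold A', Csub; ring.
        + rewrite Hker' by auto; ring. }
    rewrite Hrow; unfold mult; ring.
  - exists (fun j => if Nat.eqb j m then Cone else Czero); split.
    { exists m; rewrite Nat.eqb_refl; split; [lia | apply Cone_neq0]. }
    intros i Hi; simpl; rewrite Nat.eqb_refl, csum_eq0.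
    + replace (A i m) with Czero by (apply NNPP; intro; apply Hzero; eauto); ring.
    + intros j Hj; destruct (Nat.eqb_spec j m); [lia | ring].
Qed.

Lemma lin_indep_nonzero D k w j :
  lin_indep D k w -> (j < k)%nat -> exists i, (i < D)%nat /\ w j i <> Czero.
Proof.
  intros Hw Hj; apply NNPP; intro Hz.
  set (e := fun t => if Nat.eqb t j then Cone else Czero).
  assert (He : e j = Czero).
  { apply Hw; auto; intros i Hi.
    rewrite (csum_single k _ j Hj).
    - replace (w j i) with Czero by (apply NNPP; intro; apply Hz; eauto); ring.
    - intros t _ Ht; unfold e; destruct (Nat.eqb_spec t j); [lia | ring]. }
  unfold e in He; rewrite Nat.eqb_refl in He; exact (Cone_neq0 He).
Qed.

(* Take [r < k] maximal with [r] independent vectors in [E]: any further vector depends on them. *)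
Lemma spanned_of_not_dim_ge D (E : cvec -> Prop) k :
  ~ dim_ge D E k -> exists r b, (r < k)%nat /\ spanned_by D r b E.
Proof.
  intro Hk.
  assert (exists r, (r < k)%nat /\ dim_ge D E r /\ ~ dim_ge D E (S r))
    as [r [Hr [[b [HbE Hb]] Hn]]].
  { assert (H0 : dim_ge D E 0)
      by (exists (fun _ => vzero); split; [intros; lia | intros c _ j Hj; lia]).
    clear -Hk H0; induction k; [contradiction|].
    destruct (classic (dim_ge D E k)) as [Hd|Hd]; [exists k; auto|].
    destruct (IHk Hd) as [r [? ?]]; exists r; split; auto. }
  exists r, b; split; auto. intros u Hu.
  set (b' := fun j => if Nat.eqb j r then u else b j).
  assert (Hdep : ~ lin_indep D (S r) b').
  { intro H; apply Hn; exists b'; split; auto. intros j Hj; unfold b'.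
    destruct (Nat.eqb_spec j r); auto; apply HbE; lia. }
  apply not_all_ex_not in Hdep as [c Hc].
  apply imply_to_and in Hc as [Hsum Hc].
  apply not_all_ex_not in Hc as [j Hc]; apply imply_to_and in Hc as [Hj Hcj].
  assert (Hsum' : forall i, (i < D)%nat ->
             Cadd (lin_comb r c b i) (Cmul (c r) (u i)) = Czero).
  { intros i Hi; rewrite <- (Hsum i Hi); simpl; unfold b'; rewrite Nat.eqb_refl.
    f_equal; apply csum_ext; intros t Ht; destruct (Nat.eqb_spec t r); [lia | auto]. }
  assert (Hcr : c r <> Czero).
  { intro E0; apply Hcj. destruct (Nat.eq_dec j r) as [->|]; auto.
    apply (Hb c); try lia. intros i Hi.
    rewrite <- (Hsum' i Hi), E0; unfold lin_comb; ring. }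
  exists (fun t => Cmul (Copp (Cinv (c r))) (c t)); intros i Hi.
  transitivity (Cmul (Copp (Cinv (c r))) (lin_comb r c b i)).
  - replace (lin_comb r c b i) with (Copp (Cmul (c r) (u i)))
      by (pose proof (Hsum' i Hi) as H1;
          transitivity (Csub (Cadd (lin_comb r c b i) (Cmul (c r) (u i))) (Cmul (c r) (u i)));
          [rewrite H1 | ]; unfold Csub; ring).
    transitivity (Cmul (u i) (Cmul (c r) (Cinv (c r)))); [rewrite Cmul_inv_r by auto|]; ring.
  - unfold lin_comb; rewrite csum_mul_l; apply csum_ext; intros; ring.
Qed.

(* Expanding each [u l y], [y] in [B], in the spanning family [b] gives [length B * r]
   scalar equations in the [m] coefficients. *)
Lemma exists_comb_vanishing {X} D r m (E : cvec -> Prop) b (u : nat -> X -> cvec)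
    (dom : X -> Prop) (B : list X) :
  spanned_by D r b E ->
  (forall l y, E (u l y)) ->
  (forall l y, (l < m)%nat -> dom y -> ~ In y B -> vec_eq D (u l y) vzero) ->
  (length B * r < m)%nat ->
  exists c, (exists l, (l < m)%nat /\ c l <> Czero) /\
    forall y, dom y -> vec_eq D (lin_comb m c (fun l => u l y)) vzero.
Proof.
  intros Hspan HE Hout Hcount.
  set (coef := fun v => epsilon (inhabits (fun _ : nat => Czero))
                                (fun al => vec_eq D v (lin_comb r al b))).
  assert (Hcoef : forall l y, vec_eq D (u l y) (lin_comb r (coef (u l y)) b))
    by (intros; apply (epsilon_spec (inhabits (fun _ : nat => Czero))), Hspan, HE).
  set (A := fun e l => match nth_error B (e / r) with
                       | Some y => coef (u l y) (e mod r)
                       | None => Czero end).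
  destruct (exists_nontrivial_kernel m (length B * r) A Hcount) as [c [Hnz Hker]].
  exists c; split; auto. intros y Hy i Hi.
  destruct (classic (In y B)) as [HyB|HyB].
  - destruct (In_nth_error B y HyB) as [q Hq].
    assert (Hqlen : (q < length B)%nat) by (apply nth_error_Some; congruence).
    assert (HA : forall l t, (t < r)%nat -> A (q * r + t)%nat l = coef (u l y) t).
    { intros l t Ht; unfold A.
      rewrite <- (Nat.div_unique (q * r + t) r q t), <- (Nat.mod_unique (q * r + t) r q t), Hq
        by lia; reflexivity. }
    transitivity (csum r (fun t =>
      Cmul (b t i) (csum m (fun l => Cmul (A (q * r + t)%nat l) (c l))))).
    + unfold lin_comb at 1.
      rewrite (csum_ext m _ (fun l => Cmul (c l) (lin_comb r (coef (u l y)) b i)))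
        by (intros; rewrite <- Hcoef by auto; reflexivity).
      unfold lin_comb.
      transitivity (csum m (fun l => csum r (fun t =>
        Cmul (b t i) (Cmul (A (q * r + t)%nat l) (c l))))).
      * apply csum_ext; intros l _; rewrite csum_mul_l; apply csum_ext; intros t Ht.
        rewrite HA by auto; ring.
      * rewrite csum_swap; apply csum_ext; intros; symmetry; apply csum_mul_l.
    + apply csum_eq0; intros t Ht; rewrite Hker by nia; ring.
  - unfold lin_comb, vzero; apply csum_eq0; intros l Hl.
    rewrite (Hout l y Hl Hy HyB i Hi); unfold vzero; ring.
Qed.

(** * Lattice points and boxes *)

Definition pt0 : pt := fun _ => 0%Z.

Lemma Zpt_zsub d x a : Zpt d x -> Zpt d a -> Zpt d (zsub x a).
Proof. unfold Zpt, zsub; intros Hx Ha k Hk; rewrite Hx, Ha by auto; reflexivity. Qed.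

Lemma Zpt_zadd d x a : Zpt d x -> Zpt d a -> Zpt d (zadd x a).
Proof. unfold Zpt, zadd; intros Hx Ha k Hk; rewrite Hx, Ha by auto; reflexivity. Qed.

Lemma is_origin_iff d z : is_origin d z = true <-> forall k, (k < d)%nat -> z k = 0%Z.
Proof.
  induction d; simpl; [split; auto; intros; lia|].
  rewrite Bool.andb_true_iff, Z.eqb_eq, IHd; split.
  - intros [H1 H2] k Hk; destruct (Nat.eq_dec k d) as [->|]; auto; apply H2; lia.
  - intro H; split; [|intros]; apply H; lia.
Qed.

Lemma is_origin_zsub_eq d y x :
  Zpt d y -> Zpt d x -> is_origin d (zsub y x) = true -> y = x.
Proof.
  rewrite is_origin_iff; intros Hy Hx H; apply functional_extensionality; intro k.
  destruct (Nat.lt_ge_cases k d) as [Hk|Hk].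
  - specialize (H k Hk); unfold zsub in H; lia.
  - rewrite Hy, Hx; auto.
Qed.

Lemma is_origin_zsub_diag d x : is_origin d (zsub x x) = true.
Proof. apply is_origin_iff; intros; unfold zsub; lia. Qed.

Definition upd (x : pt) (k : nat) (v : Z) : pt := fun j => if Nat.eqb j k then v else x j.

(** [box d lo len] lists the lattice points of [[lo, lo + len)^d]. *)
Fixpoint box (d : nat) (lo : Z) (len : nat) : list pt :=
  match d with
  | O => pt0 :: nil
  | S d' =>
      flat_map (fun t => map (fun x => upd x d' (lo + Z.of_nat t)%Z) (box d' lo len)) (seq 0 len)
  end.

Lemma In_box d lo len x : In x (box d lo len) <->
  Zpt d x /\ forall k, (k < d)%nat -> (lo <= x k < lo + Z.of_nat len)%Z.
Proof.
  revert x; induction d; intro x; simpl.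
  - split.
    + intros [<-|[]]; split; [intros k _; reflexivity | intros; lia].
    + intros [HZ _]; left; apply functional_extensionality; intro k; symmetry; apply HZ; lia.
  - rewrite in_flat_map; split.
    + intros [t [Ht Hx]]; apply in_seq in Ht; apply in_map_iff in Hx as [x' [<- Hx']].
      apply IHd in Hx' as [HZ Hc]; unfold upd; split; intros k Hk;
        destruct (Nat.eqb_spec k d); try lia; [apply HZ | apply Hc]; lia.
    + intros [HZ Hc]; specialize (Hc d ltac:(lia)) as Hd.
      exists (Z.to_nat (x d - lo)); split; [apply in_seq; lia|].
      apply in_map_iff; exists (upd x d 0%Z); split.
      * apply functional_extensionality; intro k; unfold upd.
        destruct (Nat.eqb_spec k d) as [->|]; [lia | auto].
      * apply IHd; unfold upd; split; intros k Hk; destruct (Nat.eqb_spec k d);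
          try lia; [apply HZ | apply Hc]; lia.
Qed.

Lemma length_box d lo len : length (box d lo len) = (len ^ d)%nat.
Proof.
  induction d; simpl; auto.
  assert (H : forall l : list nat, length (flat_map
            (fun t => map (fun x => upd x d (lo + Z.of_nat t)%Z) (box d lo len)) l)
            = (length l * len ^ d)%nat)
    by (induction l; simpl; auto; rewrite length_app, length_map, IHd, IHl; reflexivity).
  rewrite H, length_seq; lia.
Qed.

Lemma NoDup_flat_map_disjoint {X Y} (f : X -> list Y) l : NoDup l ->
  (forall t, In t l -> NoDup (f t)) ->
  (forall t t' y, In t l -> In t' l -> In y (f t) -> In y (f t') -> t = t') ->
  NoDup (flat_map f l).
Proof.
  induction l as [|a l IH]; intros Hl Hf Hdisj; simpl; [constructor|].
  inversion Hl; subst; apply NoDup_app.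
  - apply Hf; simpl; auto.
  - apply IH; auto; [intros; apply Hf | intros; eapply Hdisj]; simpl; eauto.
  - intros y Hy Hy'; apply in_flat_map in Hy' as [t [Ht Hyt]].
    assert (a = t) as <- by (eapply Hdisj; simpl; eauto); contradiction.
Qed.

Lemma NoDup_box d lo len : NoDup (box d lo len).
Proof.
  induction d; simpl; [repeat constructor; intros []|].
  apply NoDup_flat_map_disjoint; [apply seq_NoDup | |].
  - intros t _; apply NoDup_map_NoDup_ForallPairs; auto.
    intros a b Ha Hb Hab; apply In_box in Ha, Hb.
    apply functional_extensionality; intro k.
    destruct (Nat.eq_dec k d) as [->|Hk]; [rewrite (proj1 Ha), (proj1 Hb); auto|].
    apply (f_equal (fun z => z k)) in Hab; unfold upd in Hab.
    destruct (Nat.eqb_spec k d); [lia | auto].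
  - intros t t' y _ _ Hy Hy'; apply in_map_iff in Hy as [a [Ha _]], Hy' as [b [Hb _]].
    rewrite <- Hb in Ha; apply (f_equal (fun z => z d)) in Ha; unfold upd in Ha.
    rewrite Nat.eqb_refl in Ha; lia.
Qed.

Lemma exists_coord_bound d (L : list pt) : exists a : nat,
  forall s, In s L -> forall k, (k < d)%nat -> (Z.abs (s k) <= Z.of_nat a)%Z.
Proof.
  induction L as [|s L [a Ha]]; [exists O; intros _ []|].
  assert (exists b : nat, forall k, (k < d)%nat -> (Z.abs (s k) <= Z.of_nat b)%Z) as [b Hb].
  { clear; induction d as [|d [b Hb]]; [exists O; intros; lia|].
    exists (Nat.max b (Z.to_nat (Z.abs (s d)))); intros k Hk.
    destruct (Nat.eq_dec k d) as [->|]; [lia|]; specialize (Hb k ltac:(lia)); lia. }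
  exists (Nat.max a b); intros s' [<-|Hs'] k Hk.
  - specialize (Hb k Hk); lia.
  - specialize (Ha s' Hs' k Hk); lia.
Qed.

Lemma zadd_in_box d a N x s :
  In x (box d (Z.of_nat a) N) -> Zpt d s ->
  (forall k, (k < d)%nat -> (Z.abs (s k) <= Z.of_nat a)%Z) ->
  In (zadd x s) (box d 0 (N + 2 * a)).
Proof.
  rewrite !In_box; intros [Hx Hxb] Hs Hsb; split; [apply Zpt_zadd; auto|].
  intros k Hk; specialize (Hxb k Hk); specialize (Hsb k Hk); unfold zadd; lia.
Qed.

Lemma pow_add_le d x A : ((x + A) ^ d <= x ^ d + d * A * (x + A) ^ (d - 1))%nat.
Proof.
  induction d as [|[|d] IHd]; simpl; [lia | lia|].
  assert (x ^ S d <= (x + A) ^ S d)%nat by (apply Nat.pow_le_mono_l; lia).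
  simpl in *; rewrite Nat.sub_0_r in IHd; nia.
Qed.

Lemma exists_box_size d r k A : (r < k)%nat ->
  exists N : nat, (r * (N + A) ^ d < k * N ^ d)%nat.
Proof.
  intro Hrk; exists (S ((r + 1) * d * A)).
  set (N := S ((r + 1) * d * A)).
  destruct d as [|d]; [simpl; lia|].
  pose proof (pow_add_le (S d) N A) as Hb; simpl Nat.sub in Hb; rewrite Nat.sub_0_r in Hb.
  assert (Hp : (0 < (N + A) ^ d)%nat) by (apply Nat.neq_0_lt_0, Nat.pow_nonzero; lia).
  assert ((r + 1) * (S d * A * (N + A) ^ d) < (N + A) ^ S d)%nat.
  { replace ((r + 1) * (S d * A * (N + A) ^ d))%nat
      with (((r + 1) * S d * A) * (N + A) ^ d)%nat by ring.
    rewrite Nat.pow_succ_r'; apply Nat.mul_lt_mono_pos_r; [exact Hp|]; unfold N; lia. }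
  nia.
Qed.

(** * The walk operator *)

Definition fcomb (m : nat) (c : nat -> Cx) (F : nat -> field) : field :=
  fun x => lin_comb m c (fun l => F l x).

Definition translate (a : pt) (g : field) : field := fun x => g (zsub x a).

Definition delta_comb (d m : nat) (c : nat -> Cx) (x : nat -> pt) (w : nat -> cvec) : field :=
  fcomb m c (fun l => translate (x l) (delta0 d (w l))).

Lemma in_eigenspace_translate_delta0 D C lam d a w x :
  in_eigenspace D C lam w -> in_eigenspace D C lam (translate a (delta0 d w) x).
Proof.
  intro Hw; unfold translate, delta0; destruct (is_origin d (zsub x a));
    [apply Hw | apply in_eigenspace_vzero].
Qed.

Lemma l2_of_support d D (f : field) (B : list pt) :
  (forall y, Zpt d y -> ~ In y B -> vec_eq D (f y) vzero) -> l2 d D f.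
Proof.
  intro Hf; exists (rsumL B (fun y => vnorm2 D (f y))); intros L Hnd HZL.
  apply rsumL_le_support; auto.
  - intro y; apply rsum_ge0; intros; apply Cnorm2_ge0.
  - intros y Hy Hnz; apply NNPP; intro HyB; apply Hnz.
    apply rsum_eq0; intros i Hi; rewrite Forall_forall in HZL.
    rewrite (Hf y (HZL y Hy) HyB i Hi); unfold vzero, Cnorm2; simpl; ring.
Qed.

Lemma not_limsup_pos (a : nat -> R) : ~ limsup_pos a ->
  forall eps, 0 < eps -> exists N, forall n, (N <= n)%nat -> a n < eps.
Proof.
  intros Ha eps Heps; apply NNPP; intro HN; apply Ha; exists eps; split; auto.
  intro N; apply NNPP; intro Hn; apply HN; exists N; intros n Hn'.
  apply Rnot_le_lt; intro; apply Hn; eauto.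
Qed.

Lemma exists_uniform_threshold m (Q : nat -> nat -> Prop) :
  (forall l, (l < m)%nat -> exists N, forall n, (N <= n)%nat -> Q l n) ->
  exists N, forall l n, (l < m)%nat -> (N <= n)%nat -> Q l n.
Proof.
  induction m as [|m IH]; intro H; [exists O; intros; lia|].
  destruct IH as [N1 H1]; [intros; apply H; lia|].
  destruct (H m) as [N2 H2]; [lia|].
  exists (Nat.max N1 N2); intros l n Hl Hn.
  destruct (Nat.eq_dec l m) as [->|]; [apply H2 | apply H1]; lia.
Qed.

Section Walk.
Variables (D : nat) (S : list pt) (P : pt -> cmat) (C : cmat).

Lemma Shift_fcomb m c F : Shift D S P (fcomb m c F) = fcomb m c (fun l => Shift D S P (F l)).
Proof.
  apply functional_extensionality; intro x; apply functional_extensionality; intro i.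
  unfold Shift, fcomb, lin_comb; rewrite lvsum_eval.
  rewrite (csumL_ext S _ (fun a => csum m (fun l => Cmul (c l) (mvmul D (P a) (F l (zsub x a)) i))))
    by (intros; apply mvmul_lin_comb).
  rewrite csumL_csum; apply csum_ext; intros; rewrite lvsum_eval, csumL_mul_l; reflexivity.
Qed.

Lemma ShiftAdj_fcomb m c F :
  ShiftAdj D S P (fcomb m c F) = fcomb m c (fun l => ShiftAdj D S P (F l)).
Proof.
  apply functional_extensionality; intro x; apply functional_extensionality; intro i.
  unfold ShiftAdj, fcomb, lin_comb; rewrite lvsum_eval.
  rewrite (csumL_ext S _ (fun a => csum m (fun l =>
              Cmul (c l) (mvmul D (madj (P a)) (F l (zadd x a)) i))))
    by (intros; apply mvmul_lin_comb).
  rewrite csumL_csum; apply csum_ext; intros; rewrite lvsum_eval, csumL_mul_l; reflexivity.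
Qed.

Lemma Coin_fcomb m c F : Coin D C (fcomb m c F) = fcomb m c (fun l => Coin D C (F l)).
Proof.
  apply functional_extensionality; intro x; apply functional_extensionality; intro i.
  apply mvmul_lin_comb.
Qed.

Lemma iter_UC_fcomb n m c F :
  Nat.iter n (UC D S P C) (fcomb m c F) = fcomb m c (fun l => Nat.iter n (UC D S P C) (F l)).
Proof.
  induction n; simpl; auto.
  rewrite IHn; unfold UC; rewrite Coin_fcomb, Shift_fcomb, Coin_fcomb, ShiftAdj_fcomb; reflexivity.
Qed.

Lemma UC_translate a g : UC D S P C (translate a g) = translate a (UC D S P C g).
Proof.
  unfold UC, ShiftAdj, Coin, Shift, translate.
  apply functional_extensionality; intro x; f_equal.
  apply functional_extensionality; intro b; do 2 f_equal.
  apply functional_extensionality; intro k; do 2 f_equal.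
  apply functional_extensionality; intro b'; do 3 f_equal.
  apply functional_extensionality; intro j; unfold zsub, zadd; lia.
Qed.

Lemma iter_UC_translate n a g :
  Nat.iter n (UC D S P C) (translate a g) = translate a (Nat.iter n (UC D S P C) g).
Proof. induction n; simpl; auto. rewrite IHn, UC_translate; reflexivity. Qed.

Lemma UC_feq d g h : Forall (Zpt d) S -> feq d D g h -> feq d D (UC D S P C g) (UC D S P C h).
Proof.
  rewrite Forall_forall; intros HS Hgh x Hx i Hi; unfold UC, ShiftAdj, Coin, Shift.
  rewrite !lvsum_eval; apply csumL_ext; intros a Ha.
  apply mvmul_ext_v; intros j Hj; apply mvmul_ext_v; intros j' Hj'.
  rewrite !lvsum_eval; apply csumL_ext; intros b Hb.
  apply mvmul_ext_v; intros k Hk; apply mvmul_ext_v; intros k' Hk'.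
  apply Hgh; auto; apply Zpt_zsub; auto; apply Zpt_zadd; auto.
Qed.

Lemma iter_UC_fixed d f n : Forall (Zpt d) S -> feq d D (UC D S P C f) f ->
  feq d D (Nat.iter n (UC D S P C) f) f.
Proof.
  intros HS Hf; induction n as [|n IH]; [intros ? ? ? ?; reflexivity|].
  intros y Hy i Hi; simpl; rewrite (UC_feq d _ f HS IH y Hy i Hi); apply Hf; auto.
Qed.

(* S* S = I: [P_a^* P_b = P_a P_b] vanishes unless [a = b], and [sum_a P_a = I]. *)
Lemma ShiftAdj_Shift d g x i : resolution_of_unity d D S P -> (i < D)%nat ->
  ShiftAdj D S P (Shift D S P g) x i = g x i.
Proof.
  intros [Hnd [_ [Hproj [Horth Hsum]]]] Hi.
  unfold ShiftAdj; rewrite lvsum_eval.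
  transitivity (csumL S (fun a => mvmul D (P a) (g x) i)).
  - apply csumL_ext; intros a Ha; destruct (Hproj a Ha) as [Hadj Hidem].
    assert (Hadj' : forall B, mat_eq D (mmul D (madj (P a)) B) (mmul D (P a) B))
      by (intro B; apply mmul_ext; auto; intros ? ? ? ?; reflexivity).
    unfold Shift; rewrite mvmul_lvsum, (csumL_single S _ a Hnd Ha).
    + rewrite mvmul_mmul.
      replace (zsub (zadd x a) a) with x
        by (apply functional_extensionality; intro k; unfold zsub, zadd; lia).
      apply mvmul_ext_m; intros j Hj; rewrite Hadj', Hidem; auto.
    + intros b Hb Hne; rewrite mvmul_mmul; apply mvmul_row_eq0; intros j Hj.
      rewrite Hadj'; auto; apply Horth; auto.
  - rewrite <- mvmul_lsum, (mvmul_ext_m D _ mId) by (intros; apply Hsum; auto).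
    apply mvmul_id; auto.
Qed.

(* If both [f] and [S f] lie pointwise in [E(-1)], then [U_C f = S^* C S C f = S^* S f = f]. *)
Lemma UC_fixed_of_flip d f : resolution_of_unity d D S P ->
  (forall x, in_eigenspace D C (Copp Cone) (f x)) ->
  (forall y, Zpt d y -> in_eigenspace D C (Copp Cone) (Shift D S P f y)) ->
  feq d D (UC D S P C f) f.
Proof.
  intros Hres Hf HSf y Hy i Hi.
  assert (HZS : Forall (Zpt d) S) by apply Hres.
  rewrite <- (ShiftAdj_Shift d f y i Hres Hi).
  unfold UC, ShiftAdj at 1 2; rewrite !lvsum_eval; apply csumL_ext; intros s Hs.
  apply mvmul_ext_v; intros j Hj.
  assert (Hz : Zpt d (zadd y s)) by (rewrite Forall_forall in HZS; apply Zpt_zadd; auto).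
  assert (HSC : forall z j', Shift D S P (Coin D C f) z j' = Copp (Shift D S P f z j')).
  { intros z j'; unfold Shift; rewrite !lvsum_eval, csumL_opp; apply csumL_ext; intros.
    rewrite <- mvmul_opp; apply mvmul_ext_v; intros t Ht.
    unfold Coin; rewrite (Hf _ t Ht); unfold vscal; ring. }
  unfold Coin at 1; rewrite (mvmul_ext_v D C _ (fun j' => Copp (Shift D S P f (zadd y s) j')))
    by (intros; apply HSC).
  rewrite mvmul_opp, (HSf _ Hz j Hj); unfold vscal; ring.
Qed.

Lemma Shift_translate_delta0_off d a w y : Forall (Zpt d) S -> Zpt d a -> Zpt d y ->
  (forall s, In s S -> y <> zadd a s) ->
  vec_eq D (Shift D S P (translate a (delta0 d w)) y) vzero.
Proof.
  rewrite Forall_forall; intros HS Ha Hy Hoff i Hi.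
  unfold Shift; rewrite lvsum_eval; apply csumL_eq0; intros s Hs.
  unfold translate, delta0; destruct (is_origin d (zsub (zsub y s) a)) eqn:E.
  - apply is_origin_zsub_eq in E; [|apply Zpt_zsub; auto | auto].
    exfalso; apply (Hoff s Hs); rewrite <- E.
    apply functional_extensionality; intro k; unfold zsub, zadd; lia.
  - apply mvmul_vzero.
Qed.

End Walk.

(** * Construction of the eigenvector *)

(* If every [U_C^n (delta_0 (x) w_l)] decayed at the relevant point, then at a point [y0]
   where [f = U_C^n f] is nonzero, [|f(y0)|^2 <= m * sum_l |c_l|^2 |U_C^n (delta_0 (x) w_l)|^2]
   would become arbitrarily small. *)
Lemma exists_recurrent_delta d D S P C m c x w :
  Forall (Zpt d) S -> (forall l, (l < m)%nat -> Zpt d (x l)) ->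
  feq d D (UC D S P C (delta_comb d m c x w)) (delta_comb d m c x w) ->
  fnonzero d D (delta_comb d m c x w) ->
  exists l xo, (l < m)%nat /\ Zpt d xo /\
    limsup_pos (fun n => vnorm2 D (Nat.iter n (UC D S P C) (delta0 d (w l)) xo)).
Proof.
  set (f := delta_comb d m c x w); intros HS Hx Hf [y0 [Hy0 [i0 [Hi0 Hz]]]].
  apply NNPP; intro Hcon.
  set (v := fun n l => Nat.iter n (UC D S P C) (delta0 d (w l)) (zsub y0 (x l))).
  set (z2 := Cnorm2 (f y0 i0)); set (M := rsum m (fun l => Cnorm2 (c l))).
  assert (Hz2 : 0 < z2) by (apply Cnorm2_gt0; auto).
  assert (HM : 0 <= M) by (apply rsum_ge0; intros; apply Cnorm2_ge0).
  assert (Hm : 0 < INR m) by (apply lt_0_INR; destruct m; [exfalso; apply Hz; reflexivity | lia]).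
  set (eps := z2 / (INR m * (M + 1))).
  assert (Heps : 0 < eps) by (apply Rdiv_lt_0_compat; nra).
  destruct (exists_uniform_threshold m (fun l n => vnorm2 D (v n l) < eps)) as [N HN].
  { intros l Hl; apply not_limsup_pos; auto; intro Hlim.
    apply Hcon; exists l, (zsub y0 (x l)); repeat split; auto; apply Zpt_zsub; auto. }
  assert (Ez : f y0 i0 = csum m (fun l => Cmul (c l) (v N l i0))).
  { rewrite <- (iter_UC_fixed D S P C d f N HS Hf y0 Hy0 i0 Hi0).
    unfold f, delta_comb; rewrite iter_UC_fcomb; unfold fcomb, lin_comb.
    apply csum_ext; intros; rewrite iter_UC_translate; reflexivity. }
  assert (Hbound : z2 <= INR m * (M * eps)).
  { unfold z2; rewrite Ez; eapply Rle_trans; [apply Cnorm2_csum_le|].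
    apply Rmult_le_compat_l; [lra|].
    unfold M; rewrite Rmult_comm, <- rsum_mul_l; apply rsum_le; intros l Hl.
    rewrite Cnorm2_mul, (Rmult_comm eps); apply Rmult_le_compat_l; [apply Cnorm2_ge0|].
    apply Rlt_le, Rle_lt_trans with (vnorm2 D (v N l)); [|apply HN; auto].
    apply (rsum_le_term D (fun i => Cnorm2 (v N l i))); auto; intros; apply Cnorm2_ge0. }
  assert (INR m * (M * eps) = z2 - z2 / (M + 1)) by (unfold eps; field; lra).
  assert (0 < z2 / (M + 1)) by (apply Rdiv_lt_0_compat; lra).
  lra.
Qed.

Lemma exists_flip_comb d D S P C r b m (F : nat -> field) (B : list pt) :
  mat_eq D (mmul D C C) mId ->
  spanned_by D r b (in_eigenspace D C Cone) ->
  (forall l y, (l < m)%nat -> Zpt d y -> ~ In y B -> vec_eq D (Shift D S P (F l) y) vzero) ->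
  (length B * r < m)%nat ->
  exists c, (exists l, (l < m)%nat /\ c l <> Czero) /\
    forall y, Zpt d y -> in_eigenspace D C (Copp Cone) (Shift D S P (fcomb m c F) y).
Proof.
  intros HCC Hspan Hout Hcount.
  set (u := fun l y => vadd (Shift D S P (F l) y) (mvmul D C (Shift D S P (F l) y))).
  destruct (exists_comb_vanishing D r m _ b u (Zpt d) B Hspan) as [c [Hnz Hvan]]; auto.
  - intros; apply in_eigenspace_add_mvmul; auto.
  - intros l y Hl Hy HyB i Hi; unfold u, vadd.
    rewrite (mvmul_ext_v D C _ vzero), mvmul_vzero by (apply Hout; auto).
    rewrite (Hout l y Hl Hy HyB i Hi); unfold vzero; ring.
  - exists c; split; auto; intros y Hy i Hi.
    rewrite Shift_fcomb; unfold fcomb at 1; rewrite mvmul_lin_comb.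
    set (sF := csum m (fun l => Cmul (c l) (Shift D S P (F l) y i))).
    set (sCF := csum m (fun l => Cmul (c l) (mvmul D C (Shift D S P (F l) y) i))).
    assert (HAB : Cadd sF sCF = Czero).
    { unfold sF, sCF; rewrite <- csum_add; etransitivity; [|apply (Hvan y Hy i Hi)].
      apply csum_ext; intros; unfold u, vadd; ring. }
    unfold fcomb, lin_comb, vscal; fold sF sCF.
    transitivity (Csub (Cadd sF sCF) sF); [|rewrite HAB]; unfold Csub; ring.
Qed.

Lemma delta_comb_grid_at d B k c w q0 : NoDup B -> Forall (Zpt d) B -> (q0 < length B)%nat ->
  delta_comb d (length B * k) c (fun l => nth (l / k) B pt0) (fun l => w (l mod k)) (nth q0 B pt0)
  = lin_comb k (fun j => c (q0 * k + j)%nat) w.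
Proof.
  rewrite Forall_forall; intros Hnd HB Hq0.
  apply functional_extensionality; intro i.
  unfold delta_comb, fcomb, lin_comb; rewrite csum_mul_split, (csum_single _ _ q0 Hq0).
  - apply csum_ext; intros j Hj; unfold translate, delta0.
    rewrite <- (Nat.div_unique (q0 * k + j) k q0 j), <- (Nat.mod_unique (q0 * k + j) k q0 j)
      by lia.
    rewrite is_origin_zsub_diag; reflexivity.
  - intros q Hq Hne; apply csum_eq0; intros j Hj; unfold translate, delta0.
    rewrite <- (Nat.div_unique (q * k + j) k q j) by lia.
    destruct (is_origin d (zsub (nth q0 B pt0) (nth q B pt0))) eqn:E; [|unfold vzero; ring].
    apply is_origin_zsub_eq in E; [|apply HB, nth_In; auto ..].
    exfalso; apply Hne; symmetry; apply (NoDup_nth B pt0); auto.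
Qed.

(* The unknowns are the coefficients of [delta_x (x) w_j] for [x] in the box [Bx] and
   [j < k]; the constraint [(I + C) S f = 0] takes values in [E(1)], spanned by [r]
   vectors, at each point of the box [By] containing [Bx + S]. As [r |By| < k |Bx|]
   for large boxes, a nonzero solution exists. *)
Lemma exists_fixed_delta_comb d D S P C k r w b :
  resolution_of_unity d D S P -> mat_eq D (mmul D C C) mId ->
  (forall j, (j < k)%nat -> in_eigenspace D C (Copp Cone) (w j)) -> lin_indep D k w ->
  spanned_by D r b (in_eigenspace D C Cone) -> (r < k)%nat ->
  exists m c x jj, (forall l, (l < m)%nat -> Zpt d (x l) /\ (jj l < k)%nat) /\
    let f := delta_comb d m c x (fun l => w (jj l)) in
    feq d D (UC D S P C f) f /\ l2 d D f /\ fnonzero d D f.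
Proof.
  intros Hres HCC Hw Hwi Hspan Hrk.
  assert (HS : Forall (Zpt d) S) by apply Hres.
  destruct (exists_coord_bound d S) as [a Ha].
  destruct (exists_box_size d r k (2 * a) Hrk) as [N HN].
  set (Bx := box d (Z.of_nat a) N); set (By := box d 0 (N + 2 * a)).
  set (m := (length Bx * k)%nat); set (x := fun l => nth (l / k) Bx pt0).
  assert (HxB : forall l, (l < m)%nat -> In (x l) Bx)
    by (intros l Hl; apply nth_In, Nat.Div0.div_lt_upper_bound; unfold m in Hl; lia).
  assert (HBZ : forall y, In y Bx -> Zpt d y) by (intros y Hy; apply In_box in Hy; apply Hy).
  destruct (exists_flip_comb d D S P C r b m
              (fun l => translate (x l) (delta0 d (w (l mod k)))) By)
    as [c [[l0 [Hl0 Hc0]] HSf]]; auto.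
  { intros l y Hl Hy HyB; apply Shift_translate_delta0_off; auto.
    intros s Hs ->; apply HyB, zadd_in_box; auto; rewrite Forall_forall in HS; auto. }
  { unfold m, Bx, By; rewrite !length_box; lia. }
  exists m, c, x, (fun l => l mod k); split.
  { intros l Hl; split; [apply HBZ, HxB; auto | apply Nat.mod_upper_bound; lia]. }
  intro f; split; [|split].
  - apply UC_fixed_of_flip; auto; intro y.
    apply in_eigenspace_lin_comb; intros l _.
    apply in_eigenspace_translate_delta0, Hw, Nat.mod_upper_bound; lia.
  - apply (l2_of_support d D f Bx); intros y Hy HyB i Hi.
    apply csum_eq0; intros l Hl; unfold translate, delta0.
    destruct (is_origin d (zsub y (x l))) eqn:E; [|unfold vzero; ring].
    apply is_origin_zsub_eq in E; auto; subst y; exfalso; apply HyB, HxB; auto.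
  - set (q0 := (l0 / k)%nat).
    assert (Hq0 : (q0 < length Bx)%nat)
      by (apply Nat.Div0.div_lt_upper_bound; unfold m in Hl0; lia).
    assert (Hf0 : f (nth q0 Bx pt0) = lin_comb k (fun j => c (q0 * k + j)%nat) w)
      by (apply delta_comb_grid_at; auto; [apply NoDup_box | apply Forall_forall; auto]).
    exists (nth q0 Bx pt0); split; [apply HBZ, nth_In; auto|].
    apply NNPP; intro Hzero; rewrite Hf0 in Hzero; apply Hc0.
    rewrite (Nat.div_mod_eq l0 k), Nat.mul_comm.
    apply (Hwi (fun j => c (q0 * k + j)%nat)); [|apply Nat.mod_upper_bound; lia].
    intros i Hi; apply NNPP; intro; apply Hzero; eauto.
Qed.

Theorem theorem5p1 (d D : nat) (S : list pt) (P : pt -> cmat) (C : cmat) :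
  resolution_of_unity d D S P ->
  unitary D C ->
  mat_eq D (mmul D C C) mId ->
  ~ (exists c : Cx, mat_eq D C (mscal c mId)) ->
  dim_lt D (in_eigenspace D C Cone) (in_eigenspace D C (Copp Cone)) ->
  is_eigenvalue d D (UC D S P C) Cone /\
  exists (phi : cvec) (xo : pt),
    (exists i, (i < D)%nat /\ phi i <> Czero) /\ Zpt d xo /\
    limsup_pos (fun n => vnorm2 D (Nat.iter n (UC D S P C) (delta0 d phi) xo)).
Proof.
  intros Hres _ HCC _ [k [[w [Hw Hwi]] Hnk]].
  destruct (spanned_of_not_dim_ge D _ k Hnk) as [r [b [Hrk Hspan]]].
  destruct (exists_fixed_delta_comb d D S P C k r w b Hres HCC Hw Hwi Hspan Hrk)
    as [m [c [x [jj [Hxjj [Hfix [Hl2 Hnz]]]]]]].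
  split.
  - exists (delta_comb d m c x (fun l => w (jj l))); repeat split; auto.
    intros y Hy i Hi; rewrite Hfix by auto; unfold vscal; ring.
  - destruct (exists_recurrent_delta d D S P C m c x (fun l => w (jj l)))
      as [l [xo [Hl [Hxo Hlim]]]];
      auto; [apply Hres | intros; apply Hxjj; auto |].
    exists (w (jj l)), xo; repeat split; auto.
    apply lin_indep_nonzero with k; auto; apply Hxjj; auto.
Qed.
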